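(* Let $A$ be a commutative ring and $\sigma$ a hereditary torsion theory on $A$-modules. (1) Every submodule of a totally $\sigma$-finitely cogenerated $A$-module is totally $\sigma$-finitely cogenerated. (2) For any $A$-module $M$ and submodule $N\subseteq M$, $M$ is totally $\sigma$-artinian if and only if both $N$ and $M/N$ are totally $\sigma$-artinian. (3) A finite direct sum of totally $\sigma$-artinian $A$-modules is totally $\sigma$-artinian.
   Context: $\mathcal{L}(\sigma)$ is the Gabriel filter of $\sigma$. A module $X$ is totally $\sigma$-torsion if $X\mathfrak{h}=0$ for some $\mathfrak{h}\in\mathcal{L}(\sigma)$. $X$ is totally $\sigma$-finitely cogenerated if for every family $\{X_i\}_{i\in I}$ of submodules with $\bigcap_{i}X_i$ totally $\sigma$-torsion there is a finite $J\subseteq I$ with $\bigcap_{j\in J}X_j$ totally $\sigma$-torsion. $M$ is totally $\sigma$-artinian if for every descending chain of submodules $N_1\supseteq N_2\supseteq\cdots$ there exist $m$ and $\mathfrak{h}\in\mathcal{L}(\sigma)$ with $N_m\mathfrak{h}\subseteq N_s$ for all $s\ge m$. *)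

From HB Require Import structures.
From mathcomp Require Import all_boot all_order all_algebra.
Set Implicit Arguments. Unset Strict Implicit. Unset Printing Implicit Defensive.
Import GRing.Theory.
Local Open Scope ring_scope.

Definition is_ideal (A : comPzRingType) (I : A -> Prop) : Prop :=
  I 0 /\ (forall x y, I x -> I y -> I (x + y)) /\ (forall r x, I x -> I (r * x)).

Definition colon (A : comPzRingType) (I : A -> Prop) (a : A) : A -> Prop :=
  fun r => I (r * a).

(* Hereditary torsion theories sigma on A-Mod correspond bijectively to
   Gabriel filters L(sigma); only L(sigma) enters the statement. *)
Definition gabriel_filter (A : comPzRingType) (F : (A -> Prop) -> Prop) : Prop :=
  (forall I, F I -> is_ideal I) /\
  F (fun _ => True) /\
  (forall I J, F I -> is_ideal J -> (forall x, I x -> J x) -> F J) /\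
  (forall I J, F I -> F J -> F (fun x => I x /\ J x)) /\
  (forall I a, F I -> F (colon I a)) /\
  (forall I J, is_ideal I -> F J -> (forall a, J a -> F (colon I a)) -> F I).

Definition submod (A : comPzRingType) (M : lmodType A) (X : M -> Prop) : Prop :=
  X 0 /\ (forall (a : A) x y, X x -> X y -> X (a *: x + y)).

Definition subp (T : Type) (X Y : T -> Prop) : Prop := forall x, X x -> Y x.

Definition modprod (A : comPzRingType) (M : lmodType A) (X : M -> Prop)
    (h : A -> Prop) : M -> Prop :=
  fun y => exists n (a : 'I_n -> A) (x : 'I_n -> M),
    (forall i, h (a i) /\ X (x i)) /\ y = \sum_(i < n) a i *: x i.

Definition totally_torsion (A : comPzRingType) (F : (A -> Prop) -> Prop)
    (M : lmodType A) (X : M -> Prop) : Prop :=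
  exists h, F h /\ forall y, modprod X h y -> y = 0.

(* Intersection of a finite subfamily J = {J 0, ..., J (k-1)} of a family of submodules of X
   (the empty intersection being X itself). *)
Definition fin_inter (A : comPzRingType) (M : lmodType A) (X : M -> Prop)
    (I : Type) (Xs : I -> M -> Prop) (k : nat) (J : 'I_k -> I) : M -> Prop :=
  fun y => X y /\ forall j, Xs (J j) y.

Definition totally_fcog (A : comPzRingType) (F : (A -> Prop) -> Prop)
    (M : lmodType A) (X : M -> Prop) : Prop :=
  forall (I : Type) (Xs : I -> M -> Prop),
    (forall i, submod (Xs i) /\ subp (Xs i) X) ->
    totally_torsion F (fun y => X y /\ forall i, Xs i y) ->
    exists (k : nat) (J : 'I_k -> I), totally_torsion F (fin_inter X Xs J).

Definition totally_artinian (A : comPzRingType) (F : (A -> Prop) -> Prop)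
    (M : lmodType A) (X : M -> Prop) : Prop :=
  forall N : nat -> M -> Prop,
    (forall k, submod (N k) /\ subp (N k) X) ->
    (forall k, subp (N k.+1) (N k)) ->
    exists m h, F h /\ forall s, (m <= s)%N -> subp (modprod (N m) h) (N s).

Definition mod_totally_fcog (A : comPzRingType) (F : (A -> Prop) -> Prop)
    (M : lmodType A) : Prop := totally_fcog F (fun _ : M => True).
Definition mod_totally_artinian (A : comPzRingType) (F : (A -> Prop) -> Prop)
    (M : lmodType A) : Prop := totally_artinian F (fun _ : M => True).

From HB Require Import structures.
From mathcomp Require Import all_boot all_order all_algebra.
From Stdlib Require Import Classical.
Import GRing.Theory.
Local Open Scope ring_scope.
Set Implicit Arguments.

(* (1) Total finite cogeneration passes from Y to any X included in Y: a
       family of submodules of X is also a family of submodules of Y, and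
       when the index set is empty the empty subfamily already works.
   (2), (3) Call a descending chain N of submodules totally stable when
       N_m h <= N_s for all s >= m, for some m and some h in F.  This holds iff
       the "stability ideal" {c | c N_m <= N_s for all s >= m} lies in F for
       some m.  The key extension lemma says: if the chain N /\ K is totally
       stable and N is totally stable modulo K (h N_m <= N_s + K), then N is
       totally stable; the proof shows the stability ideal is in F with the
       local character axiom T4 of Gabriel filters.  From it we get that
       totally artinian modules are closed under extensions (given a
       linear map whose kernel is totally artinian) and under sums of two,
       hence finitely many, submodules; closure under submodules and linear
       images is direct. *)

Section Submodules.
Context {A : comPzRingType} {M : lmodType A}.
Implicit Types (X Y : M -> Prop).

Lemma submod0 X : submod X -> X 0.
Proof. by case. Qed.

Lemma submodD X x y : submod X -> X x -> X y -> X (x + y).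
Proof. by move=> [_ hX] hx hy; have := hX 1 x y hx hy; rewrite scale1r. Qed.

Lemma submodZ X a x : submod X -> X x -> X (a *: x).
Proof. by move=> [hX0 hX] hx; have := hX a x 0 hx hX0; rewrite addr0. Qed.

Lemma submodB X x y : submod X -> X x -> X y -> X (x - y).
Proof.
by move=> hX hx hy; rewrite -scaleN1r; apply: submodD => //; apply: submodZ.
Qed.

Lemma submod_sum X n (f : 'I_n -> M) :
  submod X -> (forall i, X (f i)) -> X (\sum_(i < n) f i).
Proof.
move=> hX hf; apply: (big_ind X) => //; first exact: submod0.
by move=> x y; apply: submodD.
Qed.

Lemma submodI X Y : submod X -> submod Y -> submod (fun x => X x /\ Y x).
Proof.
move=> hX hY; split; first by split; apply: submod0.
by move=> a x y [? ?] [? ?]; split; [apply: hX.2 | apply: hY.2].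
Qed.

Definition subsum X Y : M -> Prop :=
  fun z => exists x y, X x /\ Y y /\ z = x + y.

Lemma subsum_submod X Y : submod X -> submod Y -> submod (subsum X Y).
Proof.
move=> hX hY; split.
  by exists 0, 0; rewrite addr0; split; [|split] => //; apply: submod0.
move=> a _ _ [x [y [hx [hy ->]]]] [x' [y' [hx' [hy' ->]]]].
exists (a *: x + x'), (a *: y + y'); split; first exact: hX.2.
by split; [apply: hY.2 | rewrite scalerDr addrACA].
Qed.

Definition bigsum n (Xs : 'I_n -> M -> Prop) : M -> Prop :=
  fun z => exists x : 'I_n -> M, (forall i, Xs i (x i)) /\ z = \sum_(i < n) x i.

Lemma bigsum_submod {n} {Xs : 'I_n -> M -> Prop} :
  (forall i, submod (Xs i)) -> submod (bigsum Xs).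
Proof.
move=> hXs; split.
  by exists (fun=> 0); split; [move=> i; apply: submod0 | rewrite big1].
move=> a _ _ [x [hx ->]] [y [hy ->]].
exists (fun i => a *: x i + y i); split; first by move=> i; apply: (hXs i).2.
by rewrite big_split /= scaler_sumr.
Qed.

Lemma modprod1 X (h : A -> Prop) a x : h a -> X x -> modprod X h (a *: x).
Proof.
by move=> ha hx; exists 1%N, (fun=> a), (fun=> x); rewrite big_ord1.
Qed.

Lemma modprod_sub X Y (h : A -> Prop) :
  submod Y -> (forall a x, h a -> X x -> Y (a *: x)) -> subp (modprod X h) Y.
Proof.
move=> hY hXY _ [n [a [x [hax ->]]]]; apply: submod_sum => // i.
by case: (hax i); apply: hXY.
Qed.

Lemma modprod_mono X Y (h : A -> Prop) :
  subp X Y -> subp (modprod X h) (modprod Y h).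
Proof.
move=> sXY _ [n [a [x [hax ->]]]]; exists n, a, x; split => // i.
by case: (hax i) => ha /sXY.
Qed.

Lemma chain_le {N : nat -> M -> Prop} {i j : nat} :
  (forall k, subp (N k.+1) (N k)) -> (i <= j)%N -> subp (N j) (N i).
Proof.
move=> hd /subnKC <-; elim: (j - i)%N => [|d IH]; first by rewrite addn0.
by rewrite addnS => x /hd /IH.
Qed.

End Submodules.

Lemma preimage_submod (A : comPzRingType) (M P : lmodType A)
    (f : {linear M -> P}) (Q : P -> Prop) : submod Q -> submod (fun x => Q (f x)).
Proof.
move=> hQ; split; first by rewrite linear0; apply: submod0.
by move=> a x y hx hy; rewrite linearP; apply: hQ.2.
Qed.

Definition image_of {A : comPzRingType} {M P : lmodType A} (f : M -> P)
    (X : M -> Prop) : P -> Prop :=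
  fun p => exists x, X x /\ f x = p.

Lemma image_submod (A : comPzRingType) (M P : lmodType A) (f : {linear M -> P})
    (X : M -> Prop) : submod X -> submod (image_of f X).
Proof.
move=> hX; split; first by exists 0; rewrite linear0; split => //; apply: submod0.
move=> a _ _ [x [hx <-]] [y [hy <-]].
by exists (a *: x + y); split; [apply: hX.2 | rewrite linearP].
Qed.

Section GabrielFilters.
Context {A : comPzRingType} {F : (A -> Prop) -> Prop} (hF : gabriel_filter F).

Lemma colon_ideal (I : A -> Prop) a : is_ideal I -> is_ideal (colon I a).
Proof.
move=> [I0 [ID IM]]; rewrite /colon; split; first by rewrite mul0r.
split=> [x y hx hy | r x hx]; first by rewrite mulrDl; apply: ID.
by rewrite -mulrA; apply: IM.
Qed.

Lemma gabriel_up (I J : A -> Prop) : F I -> is_ideal J -> subp I J -> F J.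
Proof. by case: hF => _ [_ [T3 _]]; apply: T3. Qed.

Lemma gabriel_local (I J : A -> Prop) :
  is_ideal I -> F J -> (forall a, J a -> exists2 H, F H & subp H (colon I a)) ->
  F I.
Proof.
case: hF => _ [_ [_ [_ [_ T4]]]] hI FJ hJ; apply: (T4 I J hI FJ) => a /hJ [H FH sH].
exact: gabriel_up FH (colon_ideal a hI) sH.
Qed.

Definition chain_totally_stable {M : lmodType A} (N : nat -> M -> Prop) : Prop :=
  exists m h, F h /\ forall s, (m <= s)%N -> subp (modprod (N m) h) (N s).

Definition stable_ideal {M : lmodType A} (N : nat -> M -> Prop) (m : nat) :
    A -> Prop :=
  fun c => forall s, (m <= s)%N -> forall x, N m x -> N s (c *: x).

Lemma stable_ideal_ideal {M : lmodType A} {N : nat -> M -> Prop} m :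
  (forall k, submod (N k)) -> is_ideal (stable_ideal N m).
Proof.
move=> hN; split; first by move=> s _ x _; rewrite scale0r; apply: submod0.
split=> [c d hc hd | r c hc] s hs x hx.
  by rewrite scalerDl; apply: submodD; [|apply: hc|apply: hd].
by rewrite -scalerA; apply: submodZ; [|apply: hc].
Qed.

Lemma chain_stableP {M : lmodType A} {N : nat -> M -> Prop} :
  (forall k, submod (N k)) ->
  chain_totally_stable N <-> exists m, F (stable_ideal N m).
Proof.
move=> hN; split=> [[m [h [Fh hNh]]] | [m Fm]].
  exists m; apply: gabriel_up Fh (stable_ideal_ideal m hN) _ => c hc s hs x hx.
  exact/(hNh s hs)/modprod1.
exists m, (stable_ideal N m); split=> // s hs.
by apply: modprod_sub => // c x hc; apply: hc.
Qed.

Lemma chain_stable_extension (M : lmodType A) (N : nat -> M -> Prop)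
    (K : M -> Prop) :
  (forall k, submod (N k)) -> (forall k, subp (N k.+1) (N k)) ->
  (exists m, F (stable_ideal (fun k x => N k x /\ K x) m)) ->
  (exists m h, F h /\ forall s, (m <= s)%N ->
     forall a x, h a -> N m x -> subsum (N s) K (a *: x)) ->
  exists m, F (stable_ideal N m).
Proof.
move=> hN hd [m1 FI1] [m2 [h2 [Fh2 hmod]]]; pose m := maxn m1 m2; exists m.
apply: (gabriel_local (stable_ideal_ideal m hN) Fh2) => a ha.
exists (stable_ideal (fun k x => N k x /\ K x) m1) => // b hb s hs x hx.
have [n' [k' [hn' [hk' eax]]]] :=
  hmod s (leq_trans (leq_maxr _ _) hs) a x ha (chain_le hd (leq_maxr _ _) _ hx).
(* the K-component k' = a x - n' also lies in N_m, hence b k' lies in N_s *)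
have k'Nm : N m k'.
  have -> : k' = a *: x - n' by rewrite eax addrAC subrr add0r.
  by apply: submodB; [| apply: submodZ | apply: (chain_le hd hs)].
have [bk'Ns _] := hb s (leq_trans (leq_maxl _ _) hs) k'
  (conj (chain_le hd (leq_maxl _ _) _ k'Nm) hk').
by rewrite -scalerA eax scalerDr; apply: submodD => //; apply: submodZ.
Qed.

Lemma art_sub (M : lmodType A) (X Y : M -> Prop) :
  subp X Y -> totally_artinian F Y -> totally_artinian F X.
Proof.
move=> sXY hY N hN; apply: hY => k.
by case: (hN k) => hNk sNk; split=> // x /sNk /sXY.
Qed.

Lemma art_zero (M : lmodType A) : totally_artinian F (fun x : M => x = 0).
Proof.
move=> N hN hd; have hNs k : submod (N k) by case: (hN k).
apply: (chain_stableP hNs).2; exists 0%N.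
case: hF => _ [FT _]; apply: gabriel_up FT (stable_ideal_ideal 0 hNs) _.
move=> c _ s _ x /(hN 0%N).2 ->; rewrite scaler0; exact: submod0.
Qed.

Lemma art_img (M P : lmodType A) (f : {linear M -> P}) (X : M -> Prop) :
  submod X -> totally_artinian F X -> totally_artinian F (image_of f X).
Proof.
move=> hXs hX Q hQ hd; have hQs k : submod (Q k) by case: (hQ k).
(* pull the chain back to X along f *)
pose R k x := X x /\ Q k (f x).
have hR k : submod (R k) /\ subp (R k) X.
  by split=> [|x []//]; apply: submodI (preimage_submod f (hQs k)).
have [m FRm] := (chain_stableP (fun k => (hR k).1)).1
  (hX R hR (fun k x hRx => conj hRx.1 (hd k _ hRx.2))).
apply: (chain_stableP hQs).2; exists m.
apply: gabriel_up FRm (stable_ideal_ideal m hQs) _ => c hc s hs q hq.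
have [x [hx fx]] := (hQ m).2 q hq; subst q.
by rewrite -linearZ; case: (hc s hs x (conj hx hq)).
Qed.

Lemma art_extension (M P : lmodType A) (f : {linear M -> P}) (K : M -> Prop) :
  submod K -> (forall x, f x = 0 -> K x) ->
  totally_artinian F K -> mod_totally_artinian F P -> mod_totally_artinian F M.
Proof.
move=> hK kerK artK artP N hN hd; have hNs k : submod (N k) by case: (hN k).
apply: (chain_stableP hNs).2; apply: chain_stable_extension => //.
-
  apply: (chain_stableP (fun k => submodI (hNs k) hK)).1.
  apply: artK => [k | k x [hx hKx]]; last by split => //; apply: hd.
  by split=> [|x []//]; apply: submodI.
- (* the image chain f(N) stabilises in P *)
  pose Q k := image_of f (N k).
  have hQs k : submod (Q k) by apply: image_submod.
  have hQd k : subp (Q k.+1) (Q k).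
    by move=> _ [x [hx <-]]; exists x; split=> //; apply: hd.
  have [m FQm] := (chain_stableP hQs).1
    (artP Q (fun k => conj (hQs k) (fun _ _ => I)) hQd).
  exists m, (stable_ideal Q m); split=> // s hs a x ha hx.
  have [n' [hn' fn']] := ha s hs (f x) (ex_intro _ x (conj hx erefl)).
  exists n', (a *: x - n'); split=> //; split; last by rewrite addrC subrK.
  by apply: kerK; rewrite linearB linearZ fn' subrr.
Qed.

Lemma art_subsum (M : lmodType A) (X Y : M -> Prop) :
  submod X -> submod Y -> totally_artinian F X -> totally_artinian F Y ->
  totally_artinian F (subsum X Y).
Proof.
move=> hXs hYs artX artY N hN hd; have hNs k : submod (N k) by case: (hN k).
apply: (chain_stableP hNs).2; apply: (@chain_stable_extension _ N X) => //.
-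
  apply: (chain_stableP (fun k => submodI (hNs k) hXs)).1.
  apply: artX => [k | k x [hx hXx]]; last by split => //; apply: hd.
  by split=> [|x []//]; apply: submodI.
- (* the chain Y /\ (N + X) lives in Y *)
  pose B k y := Y y /\ subsum (N k) X y.
  have hBs k : submod (B k) by apply/submodI/subsum_submod.
  have hBd k : subp (B k.+1) (B k).
    by move=> y [hy [n [x [hn hx]]]]; split=> //; exists n, x; split=> //; apply: hd.
  have [m FBm] := (chain_stableP hBs).1
    (artY B (fun k => conj (hBs k) (fun y => @proj1 _ _)) hBd).
  exists m, (stable_ideal B m); split=> // s hs a z ha hz.
  have [x [y [hx [hy ezxy]]]] := (hN m).2 z hz.
  have hyB : B m y.
    split=> //; exists z, (- x); split=> //.
    by rewrite ezxy addrAC subrr add0r -scaleN1r; split=> //; apply: submodZ.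
  have [_ [n' [x' [hn' [hx' eay]]]]] := ha s hs y hyB.
  exists n', (x' + a *: x); split=> //; split.
    by apply: submodD => //; apply: submodZ.
  by rewrite ezxy scalerDr eay addrCA [a *: x + _]addrC.
Qed.

Lemma art_bigsum (M : lmodType A) n (Xs : 'I_n -> M -> Prop) :
  (forall i, submod (Xs i)) -> (forall i, totally_artinian F (Xs i)) ->
  totally_artinian F (bigsum Xs).
Proof.
elim: n Xs => [|n IH] Xs hXs artXs.
  by apply: (art_sub _ (@art_zero M)) => _ [x [_ ->]]; rewrite big_ord0.
pose Xs' i := Xs (widen_ord (leqnSn n) i).
have hXs' i : submod (Xs' i) by apply: hXs.
apply: (art_sub _ (art_subsum (bigsum_submod hXs') (hXs ord_max)
  (IH Xs' hXs' (fun i => artXs _)) (artXs ord_max))) => _ [x [hx ->]].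
exists (\sum_(i < n) x (widen_ord (leqnSn n) i)), (x ord_max).
split; first by exists (fun i => x (widen_ord (leqnSn n) i)); split=> // ?.
by split; [apply: hx | rewrite big_ord_recr].
Qed.

Lemma torsion_sub (M : lmodType A) (X Y : M -> Prop) :
  subp X Y -> totally_torsion F Y -> totally_torsion F X.
Proof.
by move=> sXY [h [Fh hY]]; exists h; split=> // y /(modprod_mono sXY) /hY.
Qed.

Lemma fcog_sub (M : lmodType A) (X Y : M -> Prop) :
  subp X Y -> totally_fcog F Y -> totally_fcog F X.
Proof.
move=> sXY hY I Xs hXs tors; case: (classic (inhabited I)) => [[i0] | noI].
  have torsY : totally_torsion F (fun y => Y y /\ forall i, Xs i y).
    apply: torsion_sub tors => y [_ hy]; split=> //.
    exact: (hXs i0).2 _ (hy i0).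
  have [k [J torsJ]] :=
    hY I Xs (fun i => conj (hXs i).1 (fun y hy => sXY _ ((hXs i).2 _ hy))) torsY.
  by exists k, J; apply: torsion_sub torsJ => y [hy hJ]; split=> //; apply: sXY.
(* with no index at all, the empty subfamily has the same intersection X *)
exists 0%N; unshelve eexists; first by case.
apply: torsion_sub tors => y [hy _]; split=> // i.
by case: noI; constructor.
Qed.

End GabrielFilters.

Theorem mainTheorem5 (A : comPzRingType) (F : (A -> Prop) -> Prop)
  (hF : gabriel_filter F) :
  (* (1) submodules of totally sigma-f.cog. modules *)
  (forall (M : lmodType A) (N : M -> Prop),
     mod_totally_fcog F M -> submod N -> totally_fcog F N) /\
  (* (2) M artinian iff N and M/N artinian; M/N is presented by any
         surjective linear map pi : M -> P with kernel N *)
  (forall (M : lmodType A) (N : M -> Prop) (P : lmodType A)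
          (pi : {linear M -> P}),
     submod N -> (forall p : P, exists x, pi x = p) ->
     (forall x, pi x = 0 <-> N x) ->
     (mod_totally_artinian F M <->
      totally_artinian F N /\ mod_totally_artinian F P)) /\
  (* (3) finite direct sums: P = M_0 (+) ... (+) M_(n-1) via injections iota *)
  (forall (n : nat) (Ms : 'I_n -> lmodType A) (P : lmodType A)
          (iota : forall i, {linear Ms i -> P}),
     (forall p : P, exists x : forall i, Ms i, p = \sum_(i < n) iota i (x i)) ->
     (forall x y : forall i, Ms i,
        \sum_(i < n) iota i (x i) = \sum_(i < n) iota i (y i) -> forall i, x i = y i) ->
     (forall i, mod_totally_artinian F (Ms i)) ->
     mod_totally_artinian F P).
Proof.
have submodT (M : lmodType A) : submod (fun _ : M => True) by [].
split; first by move=> M N hM _; apply: fcog_sub hM.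
split=> [M N P pi hN pi_onto kerN | n Ms P iota sum_onto _ artMs].
  split=> [artM | [artN artP]].
    (* N is a submodule and P the image of M *)
    split; first exact: art_sub artM.
    apply: (art_sub _ (art_img hF pi (submodT M) artM)) => p _.
    by have [x <-] := pi_onto p; exists x.
  by apply: (art_extension hF pi hN _ artN artP) => x /kerN.
(* P is the sum of the images of the summands *)
apply: (art_sub _ (art_bigsum hF (Xs := fun i => image_of (iota i) (fun=> True)) _ _)).
- move=> p _; have [x ->] := sum_onto p.
  by exists (fun i => iota i (x i)); split=> // i; exists (x i).
- by move=> i; apply: image_submod.
- by move=> i; apply: art_img (submodT _) (artMs i).
Qed.
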